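(* Let $A \in \mathbb{R}^{m\times n}$, $b \in \mathbb{R}^m$, $x_0 \in \mathbb{R}^n$, and run the F-AB-GMRES process described in the context with arbitrary vectors $z_1,z_2,\dots \in\mathbb{R}^n$. Assume that $\beta = \|r_0\|_2 \neq 0$ and that $k-1$ steps have been successfully performed, i.e. $h_{i+1,i}\neq 0$ for all $i<k$. Assume in addition that the matrix $H_k$ is nonsingular. Then $x_k$ is a solution of $Ax=b$ if and only if $h_{k+1,k}=0$.
   Context: Flexible AB-GMRES (F-AB-GMRES). Given $A \in \mathbb{R}^{m\times n}$, $b\in\mathbb{R}^m$ and an initial vector $x_0\in\mathbb{R}^n$, set $r_0 = b - A x_0$, $\beta = \|r_0\|_2$, $v_1 = r_0/\beta$. For $k = 1,2,\dots$: choose a vector $z_k \in \mathbb{R}^n$ (in the paper, $z_k = B^{(\ell_k)} v_k$ is the result of applying $\ell_k$ steps of a Kaczmarz-type iteration, possibly randomized or greedy, to $Az = v_k$, so the map $v_k \mapsto z_k$ may change with $k$; the results hold for arbitrary $z_k$); set $w_k = A z_k$; for $i = 1,\dots,k$ set $h_{i,k} = w_k^{\mathsf T} v_i$ and then $w_k \leftarrow w_k - h_{i,k} v_i$; set $h_{k+1,k} = \|w_k\|_2$ and, if $h_{k+1,k}\neq 0$, $v_{k+1} = w_k/h_{k+1,k}$. Let $Z_k = [z_1,\dots,z_k] \in \mathbb{R}^{n\times k}$, $V_k = [v_1,\dots,v_k]\in\mathbb{R}^{m\times k}$, let $\bar H_k = \{h_{i,j}\}_{1\le i\le k+1,\,1\le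 j\le k} \in \mathbb{R}^{(k+1)\times k}$ (upper Hessenberg, with $h_{i,j}=0$ for $i>j+1$), and let $H_k$ be the $k\times k$ matrix obtained from $\bar H_k$ by deleting its last row. The $k$th iterate is $x_k = x_0 + Z_k y_k$, where $y_k = \arg\min_{y\in\mathbb{R}^k}\|\beta e_1 - \bar H_k y\|_2$ and $e_1$ is the first column of the $(k+1)\times(k+1)$ identity matrix. *)

(* F-AB-GMRES (flexible AB-GMRES) process, Arnoldi part
   with modified Gram-Schmidt, stated over an arbitrary real closed field R
   (this includes the real numbers). *)
From HB Require Import structures.
From mathcomp Require Import all_boot all_order all_algebra.
Set Implicit Arguments. Unset Strict Implicit. Unset Printing Implicit Defensive.
Import Order.TTheory GRing.Theory Num.Theory.
Local Open Scope ring_scope.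

Section FABGMRES.
Variable R : rcfType.

Definition norm2 {p : nat} (v : 'cV[R]_p) : R :=
  Num.sqrt (\sum_(i < p) v i 0 ^+ 2).

Definition dotv {p : nat} (w v : 'cV[R]_p) : R := (w^T *m v) 0 0.

Fixpoint mgs {p : nat} (vs : seq 'cV[R]_p) (w : 'cV[R]_p) : seq R * 'cV[R]_p :=
  match vs with
  | [::] => ([::], w)
  | v :: vs' =>
      let h := dotv w v in
      let r := mgs vs' (w - h *: v) in
      (h :: r.1, r.2)
  end.

Variables (m n : nat) (A : 'M[R]_(m, n)) (b : 'cV[R]_m) (x0 : 'cV[R]_n)
          (z : nat -> 'cV[R]_n).
(* z k is the vector z_k chosen at step k (k >= 1); z 0 is unused. *)

Definition r0 : 'cV[R]_m := b - A *m x0.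
Definition beta : R := norm2 r0.

(* basis k = [:: v_1; ...; v_(k+1)].  When h_(k+1,k) = 0 the vector
   v_(k+1) is set to 0 (w / 0 = 0); it is never used in that case. *)
Fixpoint basis (k : nat) : seq 'cV[R]_m :=
  match k with
  | 0 => [:: beta^-1 *: r0]
  | k'.+1 =>
      let vs := basis k' in
      let r := mgs vs (A *m z k) in
      rcons vs ((norm2 r.2)^-1 *: r.2)
  end.

Definition step (j : nat) : seq R * 'cV[R]_m := mgs (basis j.-1) (A *m z j).

(* Hessenberg entries h_(i,j), 1-based indices (i, j >= 1) *)
Definition hent (i j : nat) : R :=
  if (i <= j)%N then nth 0 (step j).1 i.-1
  else if (i == j.+1)%N then norm2 (step j).2
  else 0.

Definition Hbar (k : nat) : 'M[R]_(k.+1, k) := \matrix_(i < k.+1, j < k) hent i.+1 j.+1.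
Definition Hsq (k : nat) : 'M[R]_k := \matrix_(i < k, j < k) hent i.+1 j.+1.
Definition Zmat (k : nat) : 'M[R]_(n, k) := \matrix_(i < n, j < k) z j.+1 i 0.

Definition is_lsq_sol (k : nat) (y : 'cV[R]_k) : Prop :=
  forall y' : 'cV[R]_k,
    norm2 (beta *: delta_mx 0 0 - Hbar k *m y) <=
    norm2 (beta *: delta_mx 0 0 - Hbar k *m y').

Definition iterate (k : nat) (y : 'cV[R]_k) : 'cV[R]_n := x0 + Zmat k *m y.

End FABGMRES.

From HB Require Import structures.
From mathcomp Require Import all_boot all_order all_algebra.
Import Order.TTheory GRing.Theory Num.Theory.
Local Open Scope ring_scope.
Set Implicit Arguments. Unset Strict Implicit. Unset Printing Implicit Defensive.

(* The proof rests on two facts about the Arnoldi process, valid for any choice of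
   the z_j:  the relation A Z_k = V_(k+1) \bar H_k, whence the residual identity
     b - A x_k = V_(k+1) (beta e_1 - \bar H_k y_k),
   and the orthonormality of v_1, ..., v_(k+1) as long as no breakdown occurs.
   The theorem then reduces to two facts on small (k+1) x k Hessenberg systems:
   - if every subdiagonal entry is nonzero, beta e_1 is not in the range of \bar H_k
     (the rows 2..k+1 form a nonsingular triangular block), so a zero residual,
     which by orthonormality forces beta e_1 = \bar H_k y_k, contradicts beta <> 0;
   - if the last row vanishes and the top block H_k is invertible, beta e_1 is in
     the range of \bar H_k, so the least-squares solution has zero residual. *)

Section HessenbergSystems.
Variables (F : fieldType) (k : nat).

Definition upper_hessenberg (H : 'M[F]_(k.+1, k)) : Prop :=
  forall (i : 'I_k.+1) (j : 'I_k), (j.+1 < i)%N -> H i j = 0.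

(* An unreduced upper Hessenberg matrix (nonzero subdiagonal) has no multiple of e_1
   but 0 in its range: rows 2..k+1 form a triangular block with nonzero diagonal. *)
Lemma unreduced_hessenberg_e1 (H : 'M[F]_(k.+1, k)) (y : 'cV[F]_k) (c : F) :
  upper_hessenberg H -> (forall j : 'I_k, H (lift ord0 j) j != 0) ->
  H *m y = c *: delta_mx 0 0 -> c = 0.
Proof.
move=> hessH subdiagH Hy.
pose L : 'M[F]_k := \matrix_(i, j) H (lift ord0 i) j.
have trigL : is_trig_mx L^T.
  by apply/is_trig_mxP => i j ij; rewrite !mxE hessH // lift0 ltnS.
have unitL : L \in unitmx.
  rewrite unitmxE unitfE -det_tr det_trig //.
  by apply/prodf_neq0 => i _; rewrite !mxE.
have Ly0 : L *m y = 0.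
  apply/matrixP => i j; rewrite (ord1 j).
  have := congr1 (fun M : 'cV[F]_k.+1 => M (lift ord0 i) 0) Hy.
  rewrite !mxE /= mulr0 => row0; rewrite -[RHS]row0.
  by apply: eq_bigr => l _; rewrite mxE.
have y0 : y = 0 by rewrite -(mulKmx unitL y) Ly0 mulmx0.
by have := congr1 (fun M : 'cV[F]_k.+1 => M 0 0) Hy; rewrite y0 mulmx0 !mxE eqxx mulr1.
Qed.

Lemma solve_zero_last_row (H : 'M[F]_(k.+1, k)) (T : 'M[F]_k) (u : 'cV[F]_k.+1) :
  (forall i j : 'I_k, H (widen_ord (leqnSn k) i) j = T i j) ->
  (forall j : 'I_k, H ord_max j = 0) -> T \in unitmx -> u ord_max 0 = 0 ->
  H *m (invmx T *m \col_i u (widen_ord (leqnSn k) i) 0) = u.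
Proof.
move=> topH lastH unitT u_last.
set y := invmx T *m _.
have Ty : T *m y = \col_i u (widen_ord (leqnSn k) i) 0 by rewrite /y mulKVmx.
apply/matrixP => i c; rewrite (ord1 c) mxE.
have [ik | ki] := ltnP i k.
- have -> : i = widen_ord (leqnSn k) (Ordinal ik) by apply: val_inj.
  have := congr1 (fun M : 'cV[F]_k => M (Ordinal ik) 0) Ty; rewrite !mxE => <-.
  by apply: eq_bigr => j _; rewrite topH.
- have -> : i = ord_max by apply/val_inj/eqP; rewrite eqn_leq ki -ltnS ltn_ord.
  by rewrite u_last big1 // => j _; rewrite lastH mul0r.
Qed.
End HessenbergSystems.

Section InnerProduct.
Variables (R : rcfType) (p : nat).
Implicit Types (u v w : 'cV[R]_p).

Lemma dotvE w v : dotv w v = \sum_i w i 0 * v i 0.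
Proof. by rewrite /dotv mxE; apply: eq_bigr => i _; rewrite mxE. Qed.

Lemma dotvC w v : dotv w v = dotv v w.
Proof. by rewrite !dotvE; apply: eq_bigr => i _; rewrite mulrC. Qed.

Lemma dotvBl u w v : dotv (u - w) v = dotv u v - dotv w v.
Proof. by rewrite !dotvE -sumrB; apply: eq_bigr => i _; rewrite !mxE mulrBl. Qed.

Lemma dotvZl a w v : dotv (a *: w) v = a * dotv w v.
Proof. by rewrite !dotvE mulr_sumr; apply: eq_bigr => i _; rewrite !mxE mulrA. Qed.

Lemma dotvZr a w v : dotv w (a *: v) = a * dotv w v.
Proof. by rewrite dotvC dotvZl dotvC. Qed.

Lemma dotv_suml q (F : 'I_q -> 'cV[R]_p) v :
  dotv (\sum_(i < q) F i) v = \sum_(i < q) dotv (F i) v.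
Proof.
rewrite dotvE; under eq_bigr do rewrite summxE mulr_suml.
by rewrite exchange_big; apply: eq_bigr => i _; rewrite dotvE.
Qed.

Lemma dotvv w : dotv w w = norm2 w ^+ 2.
Proof.
rewrite /norm2 sqr_sqrtr ?dotvE; last by apply: sumr_ge0 => i _; apply: sqr_ge0.
by apply: eq_bigr => i _; rewrite expr2.
Qed.

Lemma norm2_ge0 w : 0 <= norm2 w.
Proof. exact: sqrtr_ge0. Qed.

Lemma norm20 : norm2 (0 : 'cV[R]_p) = 0.
Proof. by rewrite /norm2 big1 ?sqrtr0 // => i _; rewrite mxE expr0n. Qed.

Lemma norm2_eq0 w : norm2 w = 0 -> w = 0.
Proof.
move/eqP; rewrite /norm2 sqrtr_eq0 => sum_le0.
have sum0 : \sum_i w i 0 ^+ 2 = 0.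
  by apply/eqP; rewrite eq_le sum_le0 sumr_ge0 // => i _; apply: sqr_ge0.
apply/matrixP => i j; rewrite mxE (ord1 j).
have /(_ i isT) /eqP := psumr_eq0P (fun i _ => sqr_ge0 (w i 0)) sum0.
by rewrite sqrf_eq0 => /eqP.
Qed.

Lemma dotv_normalize w : norm2 w != 0 -> dotv ((norm2 w)^-1 *: w) ((norm2 w)^-1 *: w) = 1.
Proof. by move=> nw; rewrite dotvZl dotvZr dotvv mulrA -expr2 -exprMn mulVf // expr1n. Qed.

Definition orthonormal (vs : seq 'cV[R]_p) : Prop :=
  forall i j, (i < size vs)%N -> (j < size vs)%N -> dotv vs`_i vs`_j = (i == j)%:R.

Lemma orthonormal_rcons vs u : orthonormal vs ->
  (forall i, (i < size vs)%N -> dotv vs`_i u = 0) -> dotv u u = 1 ->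
  orthonormal (rcons vs u).
Proof.
move=> on_vs u_orth u_unit i j; rewrite size_rcons !ltnS !nth_rcons.
case: (ltngtP i (size vs)) => [ilt|ilt|ieq] ile //;
  case: (ltngtP j (size vs)) => [jlt|jlt|jeq] jle //.
- exact: on_vs.
- by rewrite u_orth // jeq (ltn_eqF ilt).
- by rewrite ieq dotvC u_orth // (gtn_eqF jlt).
- by rewrite ieq jeq u_unit eqxx.
Qed.

Lemma mgs_size vs w : size (mgs vs w).1 = size vs.
Proof. by elim: vs w => //= v vs IH w; rewrite IH. Qed.

Lemma mgs_residual vs w :
  (mgs vs w).2 = w - \sum_(i < size vs) (mgs vs w).1`_i *: vs`_i.
Proof.
elim: vs w => [|v vs IH] w /=; first by rewrite big_ord0 subr0.
by rewrite IH big_ord_recl /= opprD addrA.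
Qed.

Lemma mgs_orthogonal vs w : orthonormal vs ->
  forall i, (i < size vs)%N -> dotv (mgs vs w).2 vs`_i = 0.
Proof.
elim: vs w => [|v vs IH] w //= on_vs [|i] ilt /=.
- rewrite mgs_residual dotvBl dotv_suml big1 ?subr0.
    by rewrite dotvBl dotvZl (on_vs 0%N 0%N) // mulr1 subrr.
  move=> j _; rewrite dotvZl (on_vs j.+1 0%N) //= ?mulr0 //.
  by rewrite ltnS (leq_trans (ltn_ord j)) // mgs_size.
- by apply: IH => // a c ha hc; apply: (on_vs a.+1 c.+1).
Qed.
End InnerProduct.

Section FlexibleArnoldi.
Variables (R : rcfType) (m n : nat) (A : 'M[R]_(m, n)) (b : 'cV[R]_m)
          (x0 : 'cV[R]_n) (z : nat -> 'cV[R]_n).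

Local Notation arnoldi_basis := (basis A b x0 z).
Local Notation h := (hent A b x0 z).
Local Notation arnoldi_step := (step A b x0 z).

Lemma size_basis k : size (arnoldi_basis k) = k.+1.
Proof. by elim: k => //= k IH; rewrite size_rcons IH. Qed.

Lemma nth_basis k j i : (j <= k)%N -> (i <= j)%N ->
  (arnoldi_basis k)`_i = (arnoldi_basis j)`_i.
Proof.
elim: k => [|k IH]; first by rewrite leqn0 => /eqP ->.
rewrite leq_eqVlt => /orP [/eqP -> //|]; rewrite ltnS => jk ij.
by rewrite /= nth_rcons size_basis ltnS (leq_trans ij jk); apply: IH.
Qed.

Lemma basis_last j :
  (arnoldi_basis j.+1)`_j.+1 = (norm2 (arnoldi_step j.+1).2)^-1 *: (arnoldi_step j.+1).2.
Proof. by rewrite /= nth_rcons size_basis ltnn eqxx. Qed.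

Lemma hent_subdiag j : h j.+1 j = norm2 (arnoldi_step j).2.
Proof. by rewrite /hent ltnn eqxx. Qed.

Lemma hent_below i j : (j.+1 < i)%N -> h i j = 0.
Proof. by move=> ji; rewrite /hent leqNgt (ltn_trans (ltnSn j) ji) /= gtn_eqF. Qed.

Lemma hent_upper i j : (i <= j)%N -> h i j = (arnoldi_step j).1`_i.-1.
Proof. by move=> ij; rewrite /hent ij. Qed.

(* Column j+1 of the Arnoldi relation: A z_(j+1) = sum_i h_(i+1,j+1) v_(i+1).  It holds
   even after a breakdown, since then the MGS residual is zero. *)
Lemma arnoldi_column k j : (j < k)%N ->
  A *m z j.+1 = \sum_(i < k.+1) h i.+1 j.+1 *: (arnoldi_basis k)`_i.
Proof.
move=> jk; set v := arnoldi_basis k; set F := fun i => h i.+1 j.+1 *: v`_i.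
have decomp := mgs_residual (arnoldi_basis j) (A *m z j.+1).
rewrite size_basis -/(step A b x0 z j.+1) in decomp.
have -> : A *m z j.+1 = \sum_(i < j.+1) (arnoldi_step j.+1).1`_i *: (arnoldi_basis j)`_i
                        + (arnoldi_step j.+1).2 by rewrite decomp addrC subrK.
have residual_last : (arnoldi_step j.+1).2 = h j.+2 j.+1 *: v`_j.+1.
  rewrite (nth_basis (j := j.+1)) // basis_last hent_subdiag scalerA.
  have [nw0|nw] := eqVneq (norm2 (arnoldi_step j.+1).2) 0.
    by rewrite nw0 mul0r scale0r; apply: norm2_eq0.
  by rewrite mulfV // scale1r.
have -> : \sum_(i < k.+1) F i = \sum_(i < j.+2) F i.
  rewrite (big_ord_widen _ F (jk : j.+2 <= k.+1)%N) [RHS]big_mkcond; apply: eq_bigr => i _.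
  by case: ifP => // /negbT; rewrite -leqNgt => ji; rewrite /F hent_below ?scale0r.
rewrite [RHS]big_ord_recr /= residual_last; congr (_ + _); apply: eq_bigr => i _.
by rewrite /F hent_upper //= (nth_basis (k := k) (j := j)) ?(ltnW jk) // -ltnS.
Qed.

Lemma orthonormal_basis j : beta A b x0 != 0 ->
  (forall i, (1 <= i <= j)%N -> h i.+1 i != 0) -> orthonormal (arnoldi_basis j).
Proof.
move=> beta_neq0; elim: j => [|j IH] subdiag.
  by case=> [|i] [|c] //= _ _; rewrite dotv_normalize.
have on_j : orthonormal (arnoldi_basis j).
  by apply: IH => i /andP [i_ge1 ij]; apply: subdiag; rewrite i_ge1 (leqW ij).
have nw : norm2 (arnoldi_step j.+1).2 != 0 by rewrite -hent_subdiag subdiag //= leqnn.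
apply: orthonormal_rcons => //=; last exact: dotv_normalize.
by move=> i ij; rewrite dotvZr dotvC mgs_orthogonal ?mulr0.
Qed.

Definition Vmat k : 'M[R]_(m, k.+1) := \matrix_(i < m, j < k.+1) (arnoldi_basis k)`_j i 0.

Lemma arnoldi_relation k : A *m Zmat z k = Vmat k *m Hbar A b x0 z k.
Proof.
apply/matrixP => r j.
have := congr1 (fun M : 'cV[R]_m => M r 0) (arnoldi_column (ltn_ord j)).
rewrite /= !mxE summxE => colj.
transitivity (\sum_l A r l * z j.+1 l 0); first by apply: eq_bigr => l _; rewrite !mxE.
by rewrite colj; apply: eq_bigr => i _; rewrite !mxE mulrC.
Qed.

Lemma residual_identity k (y : 'cV[R]_k) : beta A b x0 != 0 ->
  b - A *m iterate x0 z y =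
  Vmat k *m (beta A b x0 *: delta_mx 0 0 - Hbar A b x0 z k *m y).
Proof.
move=> beta_neq0.
have V_e1 : Vmat k *m (beta A b x0 *: delta_mx 0 0) = r0 A b x0.
  rewrite -scalemxAr -colE; apply/matrixP => r c; rewrite (ord1 c) !mxE.
  by rewrite (nth_basis (j := 0)) //= !mxE mulrA mulfV // mul1r.
by rewrite /iterate mulmxDr mulmxA arnoldi_relation -mulmxA mulmxBr V_e1 opprD addrA.
Qed.

Lemma Vmat_isometry k : orthonormal (arnoldi_basis k) -> (Vmat k)^T *m Vmat k = 1%:M.
Proof.
move=> on_k; apply/matrixP => i j; rewrite !mxE -(on_k i j) ?size_basis // dotvE.
by apply: eq_bigr => l _; rewrite !mxE.
Qed.

Lemma Hbar_hessenberg k : upper_hessenberg (Hbar A b x0 z k).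
Proof. by move=> i j ji; rewrite mxE hent_below. Qed.

Lemma Hbar_last_row k : h k.+1 k = 0 -> forall j : 'I_k, Hbar A b x0 z k ord_max j = 0.
Proof.
move=> breakdown j; rewrite mxE /=; have [jk|kj] := ltnP j.+1 k; first exact: hent_below.
suff -> : j.+1 = k by [].
by apply/eqP; rewrite eqn_leq kj ltn_ord.
Qed.

Lemma lsq_sol_exact k (y y' : 'cV[R]_k) :
  Hbar A b x0 z k *m y' = beta A b x0 *: delta_mx 0 0 -> is_lsq_sol A b x0 z y ->
  beta A b x0 *: delta_mx 0 0 - Hbar A b x0 z k *m y = 0.
Proof.
move=> fit lsq_y; apply: norm2_eq0; apply/eqP; rewrite eq_le norm2_ge0 andbT.
by have := lsq_y y'; rewrite fit subrr norm20.
Qed.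

End FlexibleArnoldi.

Theorem theorem3p2 (R : rcfType) (m n : nat) (A : 'M[R]_(m, n))
  (b : 'cV[R]_m) (x0 : 'cV[R]_n) (z : nat -> 'cV[R]_n) (k : nat) :
  (0 < k)%N ->
  beta A b x0 != 0 ->
  (forall i : nat, (1 <= i < k)%N -> hent A b x0 z i.+1 i != 0) ->
  Hsq A b x0 z k \in unitmx ->
  forall y : 'cV[R]_k, is_lsq_sol A b x0 z y ->
    (A *m iterate x0 z y = b <-> hent A b x0 z k.+1 k = 0).
Proof.
move=> k_gt0 beta_neq0 subdiag_neq0 unitH y lsq_y.
have resid := residual_identity z y beta_neq0.
split => [solved | breakdown].
- apply/eqP; apply: contraT => last_neq0.
  have subdiag i : (1 <= i <= k)%N -> hent A b x0 z i.+1 i != 0.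
    case/andP=> i_ge1; rewrite leq_eqVlt => /orP [/eqP -> // | ik].
    by apply: subdiag_neq0; rewrite i_ge1 ik.
  have V_iso := Vmat_isometry (orthonormal_basis beta_neq0 subdiag).
  have fit : Hbar A b x0 z k *m y = beta A b x0 *: delta_mx 0 0.
    apply/eqP; rewrite eq_sym -subr_eq0; apply/eqP.
    by rewrite -[LHS]mul1mx -V_iso -mulmxA -resid solved subrr mulmx0.
  have beta0 : beta A b x0 = 0.
    apply: (@unreduced_hessenberg_e1 _ _ (Hbar A b x0 z k) y) fit.
      exact: Hbar_hessenberg.
    by move=> j; rewrite mxE lift0; apply: subdiag; rewrite /= ltn_ord.
  by rewrite beta0 eqxx in beta_neq0.
- have top i j : Hbar A b x0 z k (widen_ord (leqnSn k) i) j = Hsq A b x0 z k i j.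
    by rewrite !mxE.
  have e1_last : (beta A b x0 *: delta_mx 0 0 : 'cV[R]_k.+1) ord_max 0 = 0.
    by rewrite !mxE /= -[ord_max == 0]/(k == 0)%N gtn_eqF // mulr0.
  have fit := solve_zero_last_row top (Hbar_last_row breakdown) unitH e1_last.
  by move: resid; rewrite (lsq_sol_exact fit lsq_y) mulmx0 => /subr0_eq <-.
Qed.
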